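(* The super-Apollonian group $\mathcal A^S=\langle\mathbf S_1,\mathbf S_2,\mathbf S_3,\mathbf S_4,\mathbf S_1^\perp,\mathbf S_2^\perp,\mathbf S_3^\perp,\mathbf S_4^\perp\rangle\subset GL(4,\mathbb Z)$ is a Coxeter group with the complete set of defining relations $$\mathbf S_i^2=(\mathbf S_i^\perp)^2=\mathbf I\ (1\le i\le4),\qquad (\mathbf S_i\mathbf S_j^\perp)^2=\mathbf I\ (i\neq j).$$ That is, the abstract group with generators $s_1,\dots,s_4,t_1,\dots,t_4$ and relations $s_i^2=t_i^2=1$ and $(s_it_j)^2=1$ for $i\ne j$ is isomorphic to $\mathcal A^S$ via $s_i\mapsto\mathbf S_i$, $t_i\mapsto\mathbf S_i^\perp$.
   Context: $\mathbf S_i$ is the $4\times4$ integer matrix agreeing with the identity except in row $i$, which has $-1$ in position $i$ and $2$ in the other three positions (e.g. first row of $\mathbf S_1$ is $(-1,2,2,2)$); $\mathbf S_i^\perp=\mathbf S_i^T$. *)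

From HB Require Import structures.
From mathcomp Require Import all_boot all_order all_algebra.
Set Implicit Arguments. Unset Strict Implicit. Unset Printing Implicit Defensive.
Import Order.TTheory GRing.Theory Num.Theory.
Local Open Scope ring_scope.

Definition Smx (i : 'I_4) : 'M[int]_4 :=
  \matrix_(r < 4, c < 4)
    (if r == i then (if c == i then -1 else 2) else (r == c)%:R).

(* Generators of the super-Apollonian group: inl i |-> S_i, inr i |-> S_i^perp = S_i^T *)
Definition gen_mx (x : 'I_4 + 'I_4) : 'M[int]_4 :=
  match x with inl i => Smx i | inr i => (Smx i)^T end.

(* Words in the free group on the 8 abstract generators s_i (inl i), t_i (inr i);
   a letter (x, true) stands for the inverse x^{-1}. *)
Definition letter := (('I_4 + 'I_4) * bool)%type.
Definition word := seq letter.

Definition letter_mx (l : letter) : 'M[int]_4 :=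
  if l.2 then invmx (gen_mx l.1) else gen_mx l.1.

Definition eval_word (w : word) : 'M[int]_4 := \prod_(l <- w) letter_mx l.

Definition relator (r : word) : Prop :=
  exists i : 'I_4,
    r = [:: (inl i, false); (inl i, false)] \/
    r = [:: (inr i, false); (inr i, false)] \/
    exists j : 'I_4, i != j /\
      r = [:: (inl i, false); (inr j, false); (inl i, false); (inr j, false)].

Inductive pres_eq : word -> word -> Prop :=
| pe_refl w : pres_eq w w
| pe_sym u v : pres_eq u v -> pres_eq v u
| pe_trans u v w : pres_eq u v -> pres_eq v w -> pres_eq u w
| pe_free u v x b : pres_eq (u ++ v) (u ++ (x, b) :: (x, ~~ b) :: v)
| pe_rel u v r : relator r -> pres_eq (u ++ v) (u ++ r ++ v).

From mathcomp Require Import all_boot all_order all_algebra.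
From mathcomp Require Import zify ring lra.
From Stdlib Require Import ClassicalEpsilon.
Set Implicit Arguments. Unset Strict Implicit. Unset Printing Implicit Defensive.
Import Order.TTheory GRing.Theory Num.Theory.

(* The matrices S_i and S_i^T are the reflections v |-> v - <a_x, v> r_x of a
   geometric representation of the Coxeter group in which s_i and t_j commute
   for i <> j and every other pair of generators spans an infinite dihedral
   group: the Cartan matrix <a_x, r_y> is 2 on the diagonal, 0 on the commuting
   pairs, and <a_x, r_y> <a_y, r_x> >= 4 for the other pairs.  Tits' argument
   gives faithfulness.  All a_x are positive on the chamber x0 = (-1,-1,-1,-1),
   and if l(s w) > l(w) then <a_s, w x0> >= 0: split a reduced w = u v with u
   alternating in s and the first letter s' of w and v as short as possible;
   induction applies to v, and along u the signs propagate because the products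
   of Cartan entries are >= 4.  A reduced word s w' acting trivially would give
   <a_s, x0> = - <a_s, w' x0> <= 0. *)

Section MatrixFacts.

Local Open Scope ring_scope.

Lemma mulmx_colP (R : pzSemiRingType) m n (A B : 'M[R]_(m, n)) :
  (forall v : 'cV_n, A *m v = B *m v) -> A = B.
Proof.
move=> eq_AB; apply/matrixP => i j.
by move/(congr1 (fun M : 'cV_m => M i 0)): (eq_AB (delta_mx j 0)); rewrite -!colE !mxE.
Qed.

Lemma invmx_invol (R : comUnitRingType) n (A : 'M[R]_n) :
  A *m A = 1%:M -> invmx A = A.
Proof.
move=> AA; have [A_unit _] := mulmx1_unit AA.
by rewrite -[invmx A]mulmx1 -AA mulmxA mulVmx // mul1mx.
Qed.

End MatrixFacts.

Section Coxeter.

Variables (G : eqType) (com : rel G).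

Inductive cox_eq : seq G -> seq G -> Prop :=
| cox_eq_refl w : cox_eq w w
| cox_eq_sym u v : cox_eq u v -> cox_eq v u
| cox_eq_trans u v w : cox_eq u v -> cox_eq v w -> cox_eq u w
| cox_eq_cancel u v x : cox_eq (u ++ x :: x :: v) (u ++ v)
| cox_eq_swap u v x y : com x y -> cox_eq (u ++ x :: y :: v) (u ++ y :: x :: v).

Lemma cox_eq_ctx a b u v : cox_eq u v -> cox_eq (a ++ u ++ b) (a ++ v ++ b).
Proof.
elim=> {u v} [w|u v _|u v w _ IH1 _ IH2|u v x|u v x y com_xy].
- exact: cox_eq_refl.
- exact: cox_eq_sym.
- exact: cox_eq_trans IH1 IH2.
- by move: (cox_eq_cancel (a ++ u) (v ++ b) x); rewrite -!catA.
- by move: (cox_eq_swap (a ++ u) (v ++ b) com_xy); rewrite -!catA.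
Qed.

Lemma cox_eq_cons x u v : cox_eq u v -> cox_eq (x :: u) (x :: v).
Proof. by move/(cox_eq_ctx [:: x] [::]); rewrite !cats0. Qed.

Lemma cox_eq_cat u u' v v' : cox_eq u u' -> cox_eq v v' -> cox_eq (u ++ v) (u' ++ v').
Proof.
move=> eq_u eq_v; apply: cox_eq_trans (cox_eq_ctx [::] v eq_u) _.
by move: (cox_eq_ctx u' [::] eq_v); rewrite !cats0.
Qed.

Lemma cox_eq_square_com u v x y : com y x -> cox_eq (u ++ x :: y :: x :: y :: v) (u ++ v).
Proof.
move=> com_yx; have := cox_eq_swap (rcons u x) (y :: v) com_yx.
rewrite !cat_rcons => /cox_eq_trans; apply.
exact: cox_eq_trans (cox_eq_cancel u (y :: y :: v) x) (cox_eq_cancel u v y).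
Qed.

Lemma cox_eq_revK u : cox_eq (rev u ++ u) [::].
Proof.
elim: u => [|x u IH]; first exact: cox_eq_refl.
by rewrite rev_cons -cats1 -catA; apply: cox_eq_trans (cox_eq_cancel _ _ _) IH.
Qed.

Lemma cox_eq_odd u v : cox_eq u v -> odd (size u) = odd (size v).
Proof.
elim=> {u v} // [u v w _ -> //|u v x|u v x y _];
  by rewrite !size_cat /= !addnS /= ?negbK.
Qed.

Definition expr_size (w : seq G) : pred nat := fun k =>
  if excluded_middle_informative (exists2 w', size w' = k & cox_eq w w')
  then true else false.

Lemma expr_sizeP w k : reflect (exists2 w', size w' = k & cox_eq w w') (expr_size w k).
Proof. by rewrite /expr_size; case: excluded_middle_informative => H; constructor. Qed.

Lemma expr_size_self w : exists k, expr_size w k.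
Proof. by exists (size w); apply/expr_sizeP; exists w => //; apply: cox_eq_refl. Qed.

Definition cox_len w := ex_minn (expr_size_self w).

Definition reduced w := cox_len w == size w.

Lemma cox_lenP w : exists2 w', size w' = cox_len w & cox_eq w w'.
Proof. by rewrite /cox_len; case: ex_minnP => m /expr_sizeP. Qed.

Lemma cox_len_min w w' : cox_eq w w' -> cox_len w <= size w'.
Proof.
by rewrite /cox_len; case: ex_minnP => m _ min_m eq_w; apply/min_m/expr_sizeP; exists w'.
Qed.

Lemma cox_len_size w : cox_len w <= size w.
Proof. exact/cox_len_min/cox_eq_refl. Qed.

Lemma cox_len_eq w w' : cox_eq w w' -> cox_len w = cox_len w'.
Proof.
move=> eq_w; apply/eqP; rewrite eqn_leq; apply/andP; split.
- by have [v <- eq_v] := cox_lenP w'; apply/cox_len_min/(cox_eq_trans eq_w).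
- by have [v <- eq_v] := cox_lenP w; apply/cox_len_min/(cox_eq_trans (cox_eq_sym eq_w)).
Qed.

Lemma cox_len_cat u v : cox_len (u ++ v) <= cox_len u + cox_len v.
Proof.
have [u' <- eq_u] := cox_lenP u; have [v' <- eq_v] := cox_lenP v.
by rewrite -size_cat; apply/cox_len_min/cox_eq_cat.
Qed.

Lemma cox_len_odd w : odd (cox_len w) = odd (size w).
Proof. by have [w' <- /cox_eq_odd ->] := cox_lenP w. Qed.

Lemma cox_len_cons x w :
  cox_len (x :: w) = (cox_len w).+1 \/ (cox_len (x :: w)).+1 = cox_len w.
Proof.
have len_xxw : cox_len (x :: x :: w) = cox_len w := cox_len_eq (cox_eq_cancel [::] w x).
have := cox_len_cat [:: x] w; have := cox_len_cat [:: x] (x :: w).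
have := cox_len_size [:: x]; rewrite /= len_xxw.
have : cox_len (x :: w) != cox_len w.
  by apply/eqP => E; move: (cox_len_odd (x :: w)); rewrite E cox_len_odd /=; case: odd.
lia.
Qed.

Lemma reduced_eq w w' : cox_eq w w' -> reduced w' -> cox_len w = size w'.
Proof. by move=> /cox_len_eq -> /eqP. Qed.

Lemma reduced_exprP w : exists2 w', reduced w' & cox_eq w w'.
Proof.
have [w' len_w' eq_w] := cox_lenP w; exists w' => //.
by rewrite /reduced -(cox_len_eq eq_w) len_w'.
Qed.

Lemma reduced_prefix w u v :
  cox_eq w (u ++ v) -> cox_len w = size u + cox_len v -> reduced u.
Proof.
move=> /cox_len_eq -> len_uv; have := cox_len_cat u v; have := cox_len_size u.
by rewrite /reduced; lia.
Qed.

Lemma reduced_behead x w : reduced (x :: w) -> reduced w.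
Proof.
have := cox_len_cat [:: x] w; have := cox_len_size [:: x]; have := cox_len_size w.
by rewrite /reduced /=; lia.
Qed.

Lemma reduced_neq x y w : reduced (x :: y :: w) -> x != y.
Proof.
apply: contraTneq => <-; rewrite /reduced (cox_len_eq (cox_eq_cancel [::] w x)).
by have := cox_len_size w; rewrite /=; lia.
Qed.

Lemma reduced_com x y w : com x y -> ~~ reduced (x :: y :: x :: w).
Proof.
move=> com_xy; rewrite /reduced; have -> : cox_len (x :: y :: x :: w) = cox_len (y :: w).
  apply/cox_len_eq/(cox_eq_trans (cox_eq_swap [::] (x :: w) com_xy)).
  exact: cox_eq_cancel [:: y] w x.
by have := cox_len_size (y :: w); rewrite /=; lia.
Qed.

Fixpoint alternate (x y : G) (k : nat) : seq G :=
  if k is k'.+1 then x :: alternate y x k' else [::].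

Lemma reduced_alternate x y u :
  all (mem [:: x; y]) u -> reduced (x :: u) -> u = alternate y x (size u).
Proof.
elim: u x y => [//|z u IH] x y /= /andP[z_xy u_xy] red_xzu.
move: z_xy; rewrite !inE eq_sym (negbTE (reduced_neq red_xzu)) /= => /eqP eq_zy.
rewrite eq_zy in red_xzu *; congr (_ :: _); apply: IH (reduced_behead red_xzu).
by apply: sub_all u_xy => t; rewrite !inE orbC.
Qed.

Lemma pair_decomposition s s' w u0 v0 :
  all (mem [:: s; s']) u0 -> cox_eq w (u0 ++ v0) -> cox_len w = size u0 + cox_len v0 ->
  exists u v, [/\ all (mem [:: s; s']) u, size u0 <= size u, cox_eq w (u ++ v),
    cox_len w = size u + cox_len v
    & {in [:: s; s'], forall t, cox_len v < cox_len (t :: v)}].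
Proof.
have [m] := ubnP (cox_len v0); elim: m u0 v0 => // m IH u0 v0 lt_v0m u0_ss w_uv0 len_w.
have [ascent | /allPn[t t_ss descent]] :=
  boolP (all (fun t => cox_len v0 < cox_len (t :: v0)) [:: s; s']).
  by exists u0, v0; split => //; apply/allP.
have len_tv0 : (cox_len (t :: v0)).+1 = cox_len v0 by have := cox_len_cons t v0; lia.
have ut_ss : all (mem [:: s; s']) (rcons u0 t).
  by rewrite all_rcons u0_ss andbT; exact: t_ss.
have w_utv0 : cox_eq w (rcons u0 t ++ t :: v0).
  by rewrite cat_rcons; apply: cox_eq_trans w_uv0 (cox_eq_sym (cox_eq_cancel _ _ _)).
have len_utv0 : cox_len w = size (rcons u0 t) + cox_len (t :: v0) by rewrite size_rcons; lia.
have [|u [v [u_ss le_u w_uv len_uv asc]]] := IH (rcons u0 t) (t :: v0) _ ut_ss w_utv0 len_utv0.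
  by lia.
by exists u, v; split => //; apply: leq_trans le_u; rewrite size_rcons.
Qed.

Section GeometricRepresentation.

Local Open Scope ring_scope.

Variables (R : realDomainType) (n : nat).
Variables (coroot : G -> 'rV[R]_n) (root : G -> 'cV[R]_n).

Definition pairing x (v : 'cV[R]_n) : R := (coroot x *m v) 0 0.
Definition cartan x y : R := pairing x (root y).
Definition reflection x : 'M[R]_n := 1%:M - root x *m coroot x.
Definition weval (u : seq G) : 'M[R]_n := foldr (fun x M => reflection x *m M) 1%:M u.

Hypothesis comC : symmetric com.
Hypothesis cartan_diag : forall x, cartan x x = 2.
Hypothesis cartan_com : forall x y, com x y -> cartan x y = 0.
Hypothesis cartan_free :
  forall x y, x != y -> ~~ com x y -> cartan x y <= 0 /\ 4 <= cartan x y * cartan y x.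
Variable chamber : 'cV[R]_n.
Hypothesis pairing_chamber : forall x, 0 < pairing x chamber.

Lemma mul_reflection x v : reflection x *m v = v - pairing x v *: root x.
Proof. by rewrite mulmxBl mul1mx -mulmxA [coroot x *m v]mx11_scalar mul_mx_scalar. Qed.

Lemma pairing_reflection x y v :
  pairing x (reflection y *m v) = pairing x v - cartan x y * pairing y v.
Proof.
rewrite mul_reflection /pairing mulmxBr -scalemxAr.
by rewrite [(_ - _ : 'M_1) 0 0]mxE [(- _ : 'M_1) 0 0]mxE [(_ *: _ : 'M_1) 0 0]mxE mulrC.
Qed.

Lemma reflection_invol x : reflection x *m reflection x = 1%:M.
Proof.
apply: mulmx_colP => v; rewrite -mulmxA mul1mx.
rewrite mul_reflection pairing_reflection cartan_diag mul_reflection.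
have -> : pairing x v - 2 * pairing x v = - pairing x v by ring.
by rewrite scaleNr opprK subrK.
Qed.

Lemma reflection_comm x y :
  com x y -> reflection x *m reflection y = reflection y *m reflection x.
Proof.
move=> com_xy; apply: mulmx_colP => v; rewrite -!mulmxA.
rewrite [reflection x *m (_ *m _)]mul_reflection.
rewrite [reflection y *m (_ *m _)]mul_reflection.
rewrite !pairing_reflection.
by rewrite cartan_com // cartan_com 1?comC // !mul0r !subr0 !mul_reflection addrAC.
Qed.

Lemma weval_cons x u : weval (x :: u) = reflection x *m weval u.
Proof. by []. Qed.

Lemma weval_cat u v : weval (u ++ v) = weval u *m weval v.
Proof. by elim: u => [|x u IH]; rewrite ?mul1mx // cat_cons !weval_cons IH mulmxA. Qed.

Lemma weval_sound u v : cox_eq u v -> weval u = weval v.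
Proof.
elim=> {u v} // [u v w _ -> //|u v x|u v x y com_xy]; rewrite !weval_cat !weval_cons.
- by rewrite [reflection x *m _]mulmxA reflection_invol mul1mx.
- by rewrite [reflection x *m _]mulmxA reflection_comm // -mulmxA.
Qed.

(* The bound cartan x y * cartan y x >= 4 is what makes this cone stable under
   the alternating reflections x, y, x, ... *)
Definition dihedral_cone x y v :=
  0 <= pairing x v /\ 0 <= 2 * pairing y v - cartan y x * pairing x v.

Lemma cartan_le0 x y : x != y -> ~~ com x y -> cartan x y <= 0.
Proof. by move=> neq_xy ncom_xy; case: (cartan_free neq_xy ncom_xy). Qed.

Lemma dihedral_cone_reflection x y v : x != y -> ~~ com x y ->
  dihedral_cone x y v -> dihedral_cone y x (reflection x *m v).
Proof.
move=> neq_xy ncom_xy [cx cy]; have [cxy_le0 cxy_cyx] := cartan_free neq_xy ncom_xy.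
have cyx_le0 : cartan y x <= 0 by apply: cartan_le0; rewrite 1?eq_sym 1?comC.
by rewrite /dihedral_cone !pairing_reflection cartan_diag; split; nra.
Qed.

Lemma dihedral_cone_alternate k x y v : x != y -> ~~ com x y ->
  0 <= pairing x v -> 0 <= pairing y v ->
  dihedral_cone y x (weval (alternate x y k.+1) *m v).
Proof.
elim: k x y => [|k IH] x y neq_xy ncom_xy cx cy; rewrite weval_cons -mulmxA.
  rewrite mul1mx; apply: dihedral_cone_reflection => //; split => //.
  have cyx_le0 : cartan y x <= 0 by apply: cartan_le0; rewrite 1?eq_sym 1?comC.
  nra.
apply: dihedral_cone_reflection => //; apply: IH => //; by rewrite 1?eq_sym 1?comC.
Qed.

Lemma pairing_alternate_ge0 k x y v : reduced (y :: alternate x y k.+1) ->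
  0 <= pairing x v -> 0 <= pairing y v -> 0 <= pairing y (weval (alternate x y k.+1) *m v).
Proof.
move=> red_yu cx cy; have neq_xy : x != y by rewrite eq_sym (reduced_neq red_yu).
have [com_xy | ncom_xy] := boolP (com x y); last first.
  by case: (dihedral_cone_alternate k neq_xy ncom_xy cx cy).
case: k red_yu => [_ | k]; last by rewrite /= (negbTE (reduced_com _ _)) // comC.
by rewrite weval_cons -mulmxA mul1mx pairing_reflection cartan_com ?mul0r ?subr0 // comC.
Qed.

Lemma pairing_ascent_ge0 w s :
  (cox_len w < cox_len (s :: w))%N -> 0 <= pairing s (weval w *m chamber).
Proof.
have [m] := ubnP (cox_len w); elim: m w s => // m IH w s lt_wm ascent.
have [[|s' w1] red_w' w_w'] := reduced_exprP w.
  by rewrite (weval_sound w_w') mul1mx ltW.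
have len_w := reduced_eq w_w' red_w'; move/eqP: (reduced_behead red_w') => len_w1.
have [||u [v [u_ss le_u w_uv len_uv ascent_v]]] :=
  pair_decomposition (s := s) (s' := s') (u0 := [:: s']) (v0 := w1) _ w_w'.
- by rewrite /= !inE eqxx orbT.
- by rewrite len_w len_w1.
have IHv t : t \in [:: s; s'] -> 0 <= pairing t (weval v *m chamber).
  by move=> t_ss; apply: IH (ascent_v t t_ss); move: le_u; rewrite /=; lia.
have red_su : reduced (s :: u).
  apply: (@reduced_prefix (s :: w) (s :: u) v (cox_eq_cons s w_uv)).
  by have := cox_len_cons s w; rewrite /=; lia.
rewrite (weval_sound w_uv) weval_cat -mulmxA.
have u_alt := reduced_alternate u_ss red_su.
move: red_su le_u; rewrite u_alt; case: (size u) => [//|k] red_su _.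
by apply: pairing_alternate_ge0; rewrite ?IHv // !inE eqxx ?orbT.
Qed.

Lemma weval_eq1 w : weval w = 1%:M -> cox_eq w [::].
Proof.
move=> w_1; have [[|s w'] red_w w_w] := reduced_exprP w => //; exfalso.
have fixed : chamber = reflection s *m (weval w' *m chamber).
  by rewrite mulmxA -weval_cons -(weval_sound w_w) w_1 mul1mx.
have ascent : (cox_len w' < cox_len (s :: w'))%N.
  move/eqP: (reduced_behead red_w) => len_w'.
  by move/eqP: red_w => ->; rewrite len_w'.
have := pairing_chamber s; rewrite {1}fixed pairing_reflection cartan_diag.
by have := pairing_ascent_ge0 ascent; lra.
Qed.

Lemma weval_eqP u v : weval u = weval v <-> cox_eq u v.
Proof.
split=> [eq_uv | ]; last exact: weval_sound.
have /weval_eq1 ruv_1 : weval (rev u ++ v) = 1%:M.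
  by rewrite weval_cat -eq_uv -weval_cat (weval_sound (cox_eq_revK u)).
have := cox_eq_revK (rev u); rewrite revK => uru_1.
have := cox_eq_cat (cox_eq_refl u) ruv_1; rewrite cats0 catA => /cox_eq_sym/cox_eq_trans.
by apply; exact: cox_eq_cat uru_1 (cox_eq_refl v).
Qed.

End GeometricRepresentation.
End Coxeter.

Local Open Scope ring_scope.

Definition sa_com (x y : 'I_4 + 'I_4) : bool :=
  match x, y with
  | inl i, inr j | inr i, inl j => i != j
  | _, _ => false
  end.

(* S_i = 1 - e_i (4 e_i - 2 (1,1,1,1))^T and S_i^T = 1 - (2 (1,1,1,1) - 4 e_i) (- e_i)^T. *)
Definition sa_coroot (x : 'I_4 + 'I_4) : 'rV[int]_4 :=
  match x with
  | inl i => \row_k (4 * (k == i)%:R - 2)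
  | inr i => - delta_mx 0 i
  end.

Definition sa_root (x : 'I_4 + 'I_4) : 'cV[int]_4 :=
  match x with
  | inl i => delta_mx i 0
  | inr i => \col_k (2 - 4 * (k == i)%:R)
  end.

Definition sa_cartan (x y : 'I_4 + 'I_4) : int :=
  match x, y with
  | inl i, inl j | inr i, inr j => if i == j then 2 else -2
  | inl i, inr j => if i == j then -16 else 0
  | inr i, inl j => if i == j then -1 else 0
  end.

Lemma gen_mx_reflection x : gen_mx x = reflection sa_coroot sa_root x.
Proof.
apply/matrixP => r c; case: x => i; rewrite !mxE big_ord1 !mxE;
by case: i r c => [[|[|[|[|//]]]] ?] [[|[|[|[|//]]]] ?] [[|[|[|[|//]]]] ?].
Qed.

Lemma cartan_sa x y : cartan sa_coroot sa_root x y = sa_cartan x y.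
Proof.
rewrite /cartan /pairing; case: x y => i [] j; rewrite !mxE !big_ord_recl big_ord0 !mxE;
by case: i j => [[|[|[|[|//]]]] ?] [[|[|[|[|//]]]] ?].
Qed.

Lemma sa_comC : symmetric sa_com.
Proof. by case=> i [] j //=; rewrite eq_sym. Qed.

Lemma sa_cartan_diag x : cartan sa_coroot sa_root x x = 2.
Proof. by rewrite cartan_sa; case: x => i /=; rewrite eqxx. Qed.

Lemma sa_cartan_com x y : sa_com x y -> cartan sa_coroot sa_root x y = 0.
Proof. by rewrite cartan_sa; case: x y => i [] j //= /negbTE ->. Qed.

Lemma sa_cartan_free x y : x != y -> ~~ sa_com x y ->
  cartan sa_coroot sa_root x y <= 0 /\
  4 <= cartan sa_coroot sa_root x y * cartan sa_coroot sa_root y x.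
Proof.
rewrite !cartan_sa; case: x y => i [] j /= neq_xy; rewrite ?negbK;
  [| by move/eqP->; rewrite eqxx | by move/eqP->; rewrite eqxx |].
all: have /negbTE neq_ij : i != j by apply: contraNneq neq_xy => ->.
all: by rewrite neq_ij eq_sym neq_ij.
Qed.

Definition sa_chamber : 'cV[int]_4 := const_mx (-1).

Lemma sa_pairing_chamber x : 0 < pairing sa_coroot x sa_chamber.
Proof.
rewrite /pairing; case: x => i; rewrite !mxE !big_ord_recl big_ord0 !mxE;
by case: i => [[|[|[|[|//]]]] ?].
Qed.

Lemma relator_sq x : relator [:: (x, false); (x, false)].
Proof. by case: x => i; exists i; [left | right; left]. Qed.

Lemma pres_eq_cancel u v x : pres_eq (u ++ (x, false) :: (x, false) :: v) (u ++ v).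
Proof. exact/pe_sym/(pe_rel u v (relator_sq x)). Qed.

Lemma pres_eq_inv u v x : pres_eq (u ++ (x, true) :: v) (u ++ (x, false) :: v).
Proof.
have := pe_rel (rcons u (x, true)) v (relator_sq x).
rewrite !cat_rcons /= => /pe_trans; apply.
exact/pe_sym/(pe_free u ((x, false) :: v) x true).
Qed.

Lemma pres_eq_swap u v a b : relator [:: (a, false); (b, false); (a, false); (b, false)] ->
  pres_eq (u ++ (b, false) :: (a, false) :: v) (u ++ (a, false) :: (b, false) :: v).
Proof.
move=> rel_ab; have := pe_rel (rcons (rcons u (b, false)) (a, false)) v rel_ab.
rewrite !cat_rcons /= => /pe_trans; apply.
have := pres_eq_cancel (rcons u (b, false)) [:: (b, false), (a, false), (b, false) & v] a.
rewrite !cat_rcons => /pe_trans; apply.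
exact: pres_eq_cancel u [:: (a, false), (b, false) & v] b.
Qed.

Definition letters (u : seq ('I_4 + 'I_4)) : word := [seq (x, false) | x <- u].

Lemma pres_eq_letters w : pres_eq w (letters (map fst w)).
Proof.
suff prefix u : pres_eq (u ++ w) (u ++ letters (map fst w)) by exact: prefix [::].
elim: w u => [|[x b] w IH] u; first exact: pe_refl.
apply: pe_trans (_ : pres_eq (u ++ (x, false) :: w) _).
  by case: b; [exact: pres_eq_inv | exact: pe_refl].
by have := IH (rcons u (x, false)); rewrite !cat_rcons.
Qed.

Lemma pres_eq_of_cox u v : cox_eq sa_com u v -> pres_eq (letters u) (letters v).
Proof.
elim=> {u v} [w|u v _|u v w _ IH1 _ IH2|u v x|u v x y com_xy]; rewrite /letters ?map_cat /=.
- exact: pe_refl.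
- exact: pe_sym.
- exact: pe_trans IH1 IH2.
- exact: pres_eq_cancel.
case: x y com_xy => i [] j //= neq_ij.
- by apply/pe_sym/pres_eq_swap; exists i; right; right; exists j.
- by apply: pres_eq_swap; exists j; right; right; exists i; rewrite eq_sym.
Qed.

Lemma cox_of_pres_eq w1 w2 : pres_eq w1 w2 -> cox_eq sa_com (map fst w1) (map fst w2).
Proof.
elim=> {w1 w2} [w|u v _|u v w _ IH1 _ IH2|u v x b|u v r rel_r]; rewrite ?map_cat /=.
- exact: cox_eq_refl.
- exact: cox_eq_sym.
- exact: cox_eq_trans IH1 IH2.
- exact/cox_eq_sym/cox_eq_cancel.
apply: cox_eq_sym; case: rel_r => i [->|[->|[j [neq_ij ->]]]] /=; try exact: cox_eq_cancel.
by apply: cox_eq_square_com; rewrite /= eq_sym.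
Qed.

Lemma pres_eq_coxP w1 w2 : pres_eq w1 w2 <-> cox_eq sa_com (map fst w1) (map fst w2).
Proof.
split=> [|/pres_eq_of_cox eq_letters]; first exact: cox_of_pres_eq.
exact: pe_trans (pres_eq_letters w1) (pe_trans eq_letters (pe_sym (pres_eq_letters w2))).
Qed.

Lemma letter_mx_reflection l : letter_mx l = reflection sa_coroot sa_root l.1.
Proof.
rewrite /letter_mx gen_mx_reflection; case: l.2 => //.
exact/invmx_invol/reflection_invol/sa_cartan_diag.
Qed.

Lemma eval_word_weval w : eval_word w = weval sa_coroot sa_root (map fst w).
Proof.
elim: w => [|l w IH]; first by rewrite /eval_word big_nil.
by rewrite /eval_word big_cons -/(eval_word w) IH letter_mx_reflection -mulmxE.
Qed.

Theorem theorem6p1 :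
  forall w1 w2 : word, eval_word w1 = eval_word w2 <-> pres_eq w1 w2.
Proof.
move=> w1 w2; rewrite !eval_word_weval.
have weval_eq :=
  weval_eqP sa_comC sa_cartan_diag sa_cartan_com sa_cartan_free sa_pairing_chamber.
exact: iff_trans (weval_eq _ _) (iff_sym (pres_eq_coxP w1 w2)).
Qed.
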